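(* Let $((\mathfrak g,E),(\mathfrak h,F);\rho,\mu)$ be a matched pair of ENL algebras. Then $(\mathfrak g_E,\mathfrak h_F;\rho_{(E,F)},\mu_{(E,F)})$ is a matched pair of Lie algebras, where $\rho_{(E,F)}(x)\xi=\rho(Ex)\xi$ and $\mu_{(E,F)}(\xi)x=\mu(F\xi)x$ for $x\in\mathfrak g,\xi\in\mathfrak h$. Moreover, there is a canonical Lie algebra isomorphism $\mathfrak g_E\bowtie\mathfrak h_F\cong(\mathfrak g\bowtie\mathfrak h)_{E\oplus F}$.
   Context: All vector spaces are finite-dimensional over an algebraically closed field of characteristic zero. An ENL algebra $(\mathfrak g,[\cdot,\cdot]_{\mathfrak g},E)$ is a Lie algebra with a linear map $E$ such that $E[x,y]_{\mathfrak g}=[x,Ey]_{\mathfrak g}$ for all $x,y$ (equivalently $E[x,y]_{\mathfrak g}=[Ex,y]_{\mathfrak g}$); its deformed Lie algebra $\mathfrak g_E$ is $\mathfrak g$ with bracket $[x,y]_E:=[Ex,y]_{\mathfrak g}$. A matched pair of Lie algebras $(\mathfrak g,\mathfrak h;\rho,\mu)$: Lie algebras $\mathfrak g,\mathfrak h$ with representations $\rho:\mathfrak g\to\mathfrak{gl}(\mathfrak h)$, $\mu:\mathfrak h\to\mathfrak{gl}(\mathfrak g)$ such that $\rho(x)[\xi,\eta]_{\mathfrak h}=[\rho(x)\xi,\eta]_{\mathfrak h}+[\xi,\rho(x)\eta]_{\mathfrak h}+\rho(\mu(\eta)x)\xi-\rho(\mu(\xi)x)\eta$ and $\mu(\xi)[x,y]_{\mathfrak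 g}=[\mu(\xi)x,y]_{\mathfrak g}+[x,\mu(\xi)y]_{\mathfrak g}+\mu(\rho(y)\xi)x-\mu(\rho(x)\xi)y$. Its bicrossed product $\mathfrak g\bowtie\mathfrak h$ is $\mathfrak g\oplus\mathfrak h$ with the Lie bracket $[x+\xi,y+\eta]_{\bowtie}=([x,y]_{\mathfrak g}+\mu(\xi)y-\mu(\eta)x)+([\xi,\eta]_{\mathfrak h}+\rho(x)\eta-\rho(y)\xi)$. For ENL algebras $(\mathfrak g,E),(\mathfrak h,F)$, a matched pair of ENL algebras $((\mathfrak g,E),(\mathfrak h,F);\rho,\mu)$ is a matched pair of Lie algebras with $F(\rho(x)\xi)=\rho(Ex)\xi=\rho(x)(F\xi)$ and $E(\mu(\xi)x)=\mu(F\xi)x=\mu(\xi)(Ex)$ for all $x,\xi$. In that case $E\oplus F:x+\xi\mapsto Ex+F\xi$ makes $\mathfrak g\bowtie\mathfrak h$ an ENL algebra, and $(\mathfrak g\bowtie\mathfrak h)_{E\oplus F}$ denotes $\mathfrak g\oplus\mathfrak h$ with bracket $[u,v]_{E\oplus F}=[(E\oplus F)u,v]_{\bowtie}$. *)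

From HB Require Import structures.
From mathcomp Require Import all_boot all_order all_algebra.
Set Implicit Arguments. Unset Strict Implicit. Unset Printing Implicit Defensive.
Import GRing.Theory.
Local Open Scope ring_scope.

Section LieDefs.
Variable K : fieldType.

Definition lin_map (U V : lmodType K) (f : U -> V) : Prop :=
  forall (a : K) x y, f (a *: x + y) = a *: f x + f y.

Definition bilinear (U V W : lmodType K) (f : U -> V -> W) : Prop :=
  (forall (a : K) x y z, f (a *: x + y) z = a *: f x z + f y z) /\
  (forall (a : K) x y z, f x (a *: y + z) = a *: f x y + f x z).

Definition is_lie (V : lmodType K) (br : V -> V -> V) : Prop :=
  bilinear br /\ (forall x, br x x = 0) /\
  (forall x y z, br x (br y z) + br y (br z x) + br z (br x y) = 0).

Definition is_rep (G H : lmodType K) (brg : G -> G -> G) (rho : G -> H -> H) : Prop :=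
  bilinear rho /\
  (forall x y v, rho (brg x y) v = rho x (rho y v) - rho y (rho x v)).

Definition is_ENL (V : lmodType K) (br : V -> V -> V) (E : V -> V) : Prop :=
  is_lie br /\ lin_map E /\ (forall x y, E (br x y) = br x (E y)).

Definition deformed (V : lmodType K) (br : V -> V -> V) (E : V -> V) : V -> V -> V :=
  fun x y => br (E x) y.

Definition is_matched_pair (G H : lmodType K) (brg : G -> G -> G) (brh : H -> H -> H)
    (rho : G -> H -> H) (mu : H -> G -> G) : Prop :=
  [/\ is_lie brg, is_lie brh, is_rep brg rho, is_rep brh mu &
    ((forall x xi eta, rho x (brh xi eta) =
       brh (rho x xi) eta + brh xi (rho x eta) + rho (mu eta x) xi - rho (mu xi x) eta) /\
    (forall xi x y, mu xi (brg x y) =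
       brg (mu xi x) y + brg x (mu xi y) + mu (rho y xi) x - mu (rho x xi) y))].

Definition is_ENL_matched_pair (G H : lmodType K) (brg : G -> G -> G) (E : G -> G)
    (brh : H -> H -> H) (F : H -> H) (rho : G -> H -> H) (mu : H -> G -> G) : Prop :=
  [/\ is_ENL brg E, is_ENL brh F, is_matched_pair brg brh rho mu,
    (forall x xi, F (rho x xi) = rho (E x) xi /\ rho (E x) xi = rho x (F xi)) &
    (forall x xi, E (mu xi x) = mu (F xi) x /\ mu (F xi) x = mu xi (E x))].

Definition bowtie (G H : lmodType K) (brg : G -> G -> G) (brh : H -> H -> H)
    (rho : G -> H -> H) (mu : H -> G -> G) : (G * H)%type -> (G * H)%type -> (G * H)%type :=
  fun u v => (brg u.1 v.1 + mu u.2 v.1 - mu v.2 u.1,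
              brh u.2 v.2 + rho u.1 v.2 - rho v.1 u.2).

Definition dsum (G H : lmodType K) (E : G -> G) (F : H -> H) : (G * H)%type -> (G * H)%type :=
  fun u => (E u.1, F u.2).

Definition is_lie_iso (V W : lmodType K) (br1 : V -> V -> V) (br2 : W -> W -> W)
    (phi : V -> W) : Prop :=
  [/\ is_lie br1, is_lie br2, lin_map phi, bijective phi &
      forall x y, phi (br1 x y) = br2 (phi x) (phi y)].

End LieDefs.

(** The deformed brackets [Ex, y] and [Fξ, η] are again Lie brackets because E
    and F commute with the adjoint actions, and these commutation relations
    (E μ(ξ)x = μ(Fξ)x = μ(ξ)Ex and F ρ(x)ξ = ρ(Ex)ξ = ρ(x)Fξ) move E and F
    through every term of the matched-pair identities, so the twisted actions
    ρ(E·) and μ(F·) form a matched pair of the deformed algebras.  The same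
    relations show that the bicrossed bracket of the deformed matched pair is
    literally [(E ⊕ F)u, v] in g ⋈ h, so the identity map is the isomorphism. *)
From Pilot Require Import Defs.
From HB Require Import structures.
From mathcomp Require Import all_boot all_order all_algebra.
From mathcomp Require Import ring.
Import GRing.Theory VectorInternalTheory.
Local Open Scope ring_scope.
Set Implicit Arguments. Unset Strict Implicit.

Section LinearMap.
Variables (K : fieldType) (U V : lmodType K) (f : U -> V).
Hypothesis linf : lin_map f.

Lemma lin_mapD x y : f (x + y) = f x + f y.
Proof. by rewrite -{1}(scale1r x) linf scale1r. Qed.

Lemma lin_map0 : f 0 = 0.
Proof. by apply: (addrI (f 0)); rewrite -lin_mapD !addr0. Qed.

Lemma lin_mapN x : f (- x) = - f x.
Proof. by apply/eqP; rewrite -addr_eq0 -lin_mapD addNr lin_map0. Qed.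

Lemma lin_mapZ a x : f (a *: x) = a *: f x.
Proof. by rewrite -(addr0 (a *: x)) linf lin_map0 addr0. Qed.

End LinearMap.

Section BilinearMap.
Variables (K : fieldType) (U V W : lmodType K) (f : U -> V -> W).
Hypothesis bif : Defs.bilinear f.

Lemma bilinear_linl z : lin_map (f^~ z).
Proof. by move=> a x y; apply: bif.1. Qed.

Lemma bilinear_linr x : lin_map (f x).
Proof. by move=> a y z; apply: bif.2. Qed.

Lemma bilinearDl x y z : f (x + y) z = f x z + f y z.
Proof. exact: lin_mapD (bilinear_linl z) x y. Qed.

Lemma bilinearNl x z : f (- x) z = - f x z.
Proof. exact: lin_mapN (bilinear_linl z) x. Qed.

Lemma bilinearZl a x z : f (a *: x) z = a *: f x z.
Proof. exact: lin_mapZ (bilinear_linl z) a x. Qed.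

Lemma bilinearDr x y z : f z (x + y) = f z x + f z y.
Proof. exact: lin_mapD (bilinear_linr z) x y. Qed.

Lemma bilinearNr x z : f z (- x) = - f z x.
Proof. exact: lin_mapN (bilinear_linr z) x. Qed.

Lemma bilinearZr a x z : f z (a *: x) = a *: f z x.
Proof. exact: lin_mapZ (bilinear_linr z) a x. Qed.

End BilinearMap.

Section LieBracket.
Variables (K : fieldType) (V : lmodType K) (br : V -> V -> V).
Hypothesis lie_br : is_lie br.

Lemma lie_anticomm x y : br x y = - br y x.
Proof.
have [bil [alt _]] := lie_br.
apply/eqP; rewrite -addr_eq0; have := alt (x + y).
by rewrite (bilinearDl bil) !(bilinearDr bil) !alt add0r addr0 => ->.
Qed.

Lemma lie_jacobi x y z : br x (br y z) = - br y (br z x) - br z (br x y).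
Proof. by apply/eqP; rewrite -opprD -addr_eq0 addrA; apply/eqP; apply: lie_br.2.2. Qed.

End LieBracket.

Lemma eq_is_lie (K : fieldType) (V : lmodType K) (br1 br2 : V -> V -> V) :
  br1 =2 br2 -> is_lie br1 -> is_lie br2.
Proof.
move=> e [[bil bir] [alt jac]]; split; [split|split].
- by move=> a x y z; rewrite -!e bil.
- by move=> a x y z; rewrite -!e bir.
- by move=> x; rewrite -e alt.
- by move=> x y z; rewrite -!e jac.
Qed.

Definition matched_compat (K : fieldType) (G H : lmodType K) (brh : H -> H -> H)
    (rho : G -> H -> H) (mu : H -> G -> G) : Prop :=
  forall x xi eta, rho x (brh xi eta) =
    brh (rho x xi) eta + brh xi (rho x eta) + rho (mu eta x) xi - rho (mu xi x) eta.

Definition enl_compatible (K : fieldType) (G H : lmodType K) (E : G -> G) (F : H -> H)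
    (rho : G -> H -> H) : Prop :=
  forall x xi, F (rho x xi) = rho (E x) xi /\ rho (E x) xi = rho x (F xi).

(* The bicrossed product is treated over vectType only so that its identities can be
   checked in coordinates, where they become commutative ring identities. *)
Ltac coord_ring := apply: v2r_inj; rewrite ?(linearD, linearN, linearZ, linear0);
  apply/rowP => j; rewrite ?mxE; ring.

Section Bicrossed.
Variables (K : fieldType) (G H : vectType K) (brg : G -> G -> G) (brh : H -> H -> H)
  (rho : G -> H -> H) (mu : H -> G -> G).
Hypothesis mp : is_matched_pair brg brh rho mu.

Let lie_g : is_lie brg. Proof. by case: mp. Qed.
Let lie_h : is_lie brh. Proof. by case: mp. Qed.
Let rep_rho : is_rep brg rho. Proof. by case: mp. Qed.
Let rep_mu : is_rep brh mu. Proof. by case: mp. Qed.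
Let compat_rho : matched_compat brh rho mu. Proof. by case: mp => _ _ _ _ []. Qed.
Let compat_mu : matched_compat brg mu rho. Proof. by case: mp => _ _ _ _ []. Qed.

Let add_pair (u u' : G) (v v' : H) : (u, v) + (u', v') = (u + u', v + v').
Proof. by []. Qed.

Let bilE := (bilinearDl lie_g.1, bilinearNl lie_g.1, bilinearZl lie_g.1,
  bilinearDr lie_g.1, bilinearNr lie_g.1, bilinearZr lie_g.1,
  bilinearDl lie_h.1, bilinearNl lie_h.1, bilinearZl lie_h.1,
  bilinearDr lie_h.1, bilinearNr lie_h.1, bilinearZr lie_h.1,
  bilinearDl rep_rho.1, bilinearNl rep_rho.1, bilinearZl rep_rho.1,
  bilinearDr rep_rho.1, bilinearNr rep_rho.1, bilinearZr rep_rho.1,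
  bilinearDl rep_mu.1, bilinearNl rep_mu.1, bilinearZl rep_mu.1,
  bilinearDr rep_mu.1, bilinearNr rep_mu.1, bilinearZr rep_mu.1).

Lemma bowtie_bilinear : Defs.bilinear (bowtie brg brh rho mu).
Proof.
have scale_pair a (u : G) (v : H) : a *: (u, v) = (a *: u, a *: v) by [].
split=> a [x xi] [y eta] [z zeta]; rewrite /bowtie /= scale_pair add_pair;
  congr pair; rewrite ?bilE; coord_ring.
Qed.

Lemma bowtie_alternating u : bowtie brg brh rho mu u u = 0.
Proof. by case: u => x xi; rewrite /bowtie /= lie_g.2.1 lie_h.2.1 !add0r !subrr. Qed.

Lemma bowtie_jacobi u v w :
  let br := bowtie brg brh rho mu in br u (br v w) + br v (br w u) + br w (br u v) = 0.
Proof.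
case: u v w => [x xi] [y eta] [z zeta] /=; rewrite /bowtie /= !add_pair; congr pair.
- (* After the Jacobi, representation and compatibility rewrites, only the orientation
     of the mixed brackets stands between us and a purely additive identity. *)
  rewrite ?bilE (lie_jacobi lie_g x y z) !rep_mu.2 !compat_mu.
  rewrite (lie_anticomm lie_g z (mu xi y)) (lie_anticomm lie_g x (mu eta z)).
  rewrite (lie_anticomm lie_g y (mu zeta x)).
  coord_ring.
- rewrite ?bilE (lie_jacobi lie_h xi eta zeta) !rep_rho.2 !compat_rho.
  rewrite (lie_anticomm lie_h zeta (rho x eta)) (lie_anticomm lie_h xi (rho y zeta)).
  rewrite (lie_anticomm lie_h eta (rho z xi)).
  coord_ring.
Qed.

Lemma bowtie_lie : is_lie (bowtie brg brh rho mu).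
Proof.
split; [exact: bowtie_bilinear | split; [exact: bowtie_alternating | exact: bowtie_jacobi]].
Qed.

End Bicrossed.

Section Deformation.
Variables (K : fieldType) (G H : lmodType K).

Lemma enl_shift (br : G -> G -> G) E : is_ENL br E -> forall x y, br (E x) y = br x (E y).
Proof.
case=> lie_br [linE brE] x y.
by rewrite (lie_anticomm lie_br) -brE (lie_anticomm lie_br y x) (lin_mapN linE) opprK brE.
Qed.

Lemma deformed_lie (br : G -> G -> G) E : is_ENL br E -> is_lie (deformed br E).
Proof.
move=> enl; have shift := enl_shift enl; case: enl => [[[bil bir] [alt jac]] [linE brE]].
split; [split|split] => /=.
- by move=> a x y z; rewrite /deformed linE bil.
- by move=> a x y z; rewrite /deformed bir.
- by move=> x; rewrite /deformed shift -brE alt lin_map0.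
- move=> x y z; rewrite /deformed [br (E z) x]shift.
  by rewrite [br (E z) (br (E x) y)]shift brE jac.
Qed.

Lemma deformed_rep (brg : G -> G -> G) E (rho : G -> H -> H) :
  is_ENL brg E -> is_rep brg rho -> is_rep (deformed brg E) (fun x => rho (E x)).
Proof.
case=> _ [linE brE] [[bil bir] rep]; split; [split|] => /=.
- by move=> a x y z; rewrite linE bil.
- by move=> a x y z; rewrite bir.
- by move=> x y v; rewrite /deformed brE rep.
Qed.

End Deformation.

Lemma deformed_matched_compat (K : fieldType) (G H : lmodType K) (brh : H -> H -> H)
    (E : G -> G) (F : H -> H) (rho : G -> H -> H) (mu : H -> G -> G) :
  enl_compatible E F rho -> enl_compatible F E mu -> matched_compat brh rho mu ->
  matched_compat (deformed brh F) (fun x => rho (E x)) (fun xi => mu (F xi)).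
Proof.
move=> crho cmu compat x xi eta; rewrite /deformed compat.
have rhoF y zeta : F (rho y zeta) = rho y (F zeta) by rewrite (crho y zeta).1 (crho y zeta).2.
have muE y zeta : E (mu zeta y) = mu zeta (E y) by rewrite (cmu zeta y).1 (cmu zeta y).2.
by rewrite rhoF -(cmu eta x).2 (crho _ xi).2 muE.
Qed.

Section ENLMatchedPair.
Variables (K : fieldType) (G H : lmodType K) (brg : G -> G -> G) (E : G -> G)
  (brh : H -> H -> H) (F : H -> H) (rho : G -> H -> H) (mu : H -> G -> G).
Hypothesis mpENL : is_ENL_matched_pair brg E brh F rho mu.

Let compat_rho : enl_compatible E F rho. Proof. by case: mpENL. Qed.
Let compat_mu : enl_compatible F E mu. Proof. by move=> xi x; case: mpENL => _ _ _ _ /(_ x xi). Qed.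

Lemma deformed_matched_pair :
  is_matched_pair (deformed brg E) (deformed brh F) (fun x => rho (E x)) (fun xi => mu (F xi)).
Proof.
case: mpENL => enlE enlF [_ _ rep_rho rep_mu [mc_rho mc_mu]] _ _.
split; [exact: deformed_lie | exact: deformed_lie | exact: deformed_rep
  | exact: deformed_rep | split].
- exact: deformed_matched_compat compat_rho compat_mu mc_rho.
- exact: deformed_matched_compat compat_mu compat_rho mc_mu.
Qed.

Lemma bowtie_deformed :
  bowtie (deformed brg E) (deformed brh F) (fun x => rho (E x)) (fun xi => mu (F xi))
  =2 deformed (bowtie brg brh rho mu) (dsum E F).
Proof.
move=> [x xi] [y eta]; rewrite /bowtie /deformed /dsum /=.
by rewrite (compat_mu eta x).2 (compat_rho y xi).2.
Qed.

End ENLMatchedPair.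

Theorem theorem2p5 (K : closedFieldType) (charK0 : [pchar K] =i pred0)
    (G H : vectType K) (brg : G -> G -> G) (E : G -> G)
    (brh : H -> H -> H) (F : H -> H) (rho : G -> H -> H) (mu : H -> G -> G) :
  is_ENL_matched_pair brg E brh F rho mu ->
  let rhoEF := fun x xi => rho (E x) xi in
  let muEF := fun xi x => mu (F xi) x in
  is_matched_pair (deformed brg E) (deformed brh F) rhoEF muEF /\
  is_lie_iso (bowtie (deformed brg E) (deformed brh F) rhoEF muEF)
             (deformed (bowtie brg brh rho mu) (dsum E F)) id.
Proof.
move=> mpENL rhoEF muEF.
have mpEF := deformed_matched_pair mpENL.
have bowtieE := bowtie_deformed mpENL.
split=> //; split.
- exact: bowtie_lie.
- exact: eq_is_lie bowtieE (bowtie_lie mpEF).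
- by [].
- by exists id.
- exact: bowtieE.
Qed.
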